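(* Let $\mathcal X,\mathcal Y$ be Hilbert spaces and $\mathbf A\colon\mathcal X\to\mathcal Y$ a bounded linear operator with singular value decomposition $\mathbf Ax=\sum_{n\in\mathbb N}\sigma_n\langle u_n,x\rangle v_n$, where $(u_n)$, $(v_n)$ are orthonormal systems in $\mathcal X$, $\mathcal Y$ and $\sigma_n>0$. Let $\mathbf B_\alpha(y)=\sum_{\sigma_n^2\ge\alpha}\sigma_n^{-1}\langle y,v_n\rangle u_n$ be truncated SVD, let $(\mathbf U_{\theta(\alpha)})_{\alpha>0}$ be maps $\mathcal X\to\mathcal X$, and define $$\nu_{\theta(\alpha)}(z)\coloneqq(\mathrm{Id}_{\mathcal X}-\mathbf B_\alpha\mathbf A)\mathbf U_{\theta(\alpha)}(z)=\sum_{\sigma_n^2<\alpha}\langle\mathbf U_{\theta(\alpha)}z,u_n\rangle u_n,\qquad \mathbf R_\alpha(y_\delta)\coloneqq(\mathrm{Id}_{\mathcal X}+\nu_{\theta(\alpha)})\mathbf B_\alpha(y_\delta).$$ Let $\mathrm{Id}_{\mathcal X}+\mathbf N$ be a null space network, $\mathcal M\coloneqq(\mathrm{Id}_{\mathcal X}+\mathbf N)(\operatorname{ran}(\mathbf A^{+}))$, and assume $(\nu_{\theta(\alpha)})_{\alpha>0}$ is $((\mathbf B_\alpha)_{\alpha>0},\mathbf N)$-adapted. Let $\rho,\mu>0$ and assume $d_\alpha(x;\rho,\mu)=\mathcal O(\alpha^\mu)$ for all $x$ in some set $\mathcal M_{\rho,\mu}\subseteq\mathcal M$. Then, provided $\alpha\asymp\delta^{2/(2\mu+1)}$,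 for all $x\in\mathcal M_{\rho,\mu}$ and $y_\delta\in\mathcal Y$ with $\|\mathbf Ax-y_\delta\|\le\delta$ we have $\|\mathbf R_\alpha(y_\delta)-x\|=\mathcal O(\delta^{2\mu/(2\mu+1)})$ as $\alpha\to0$.
   Context: $\mathbf A^{+}$ is the Moore–Penrose inverse, $\operatorname{ran}(\mathbf A^{+})=\ker(\mathbf A)^\perp$. A null space network is $\mathrm{Id}_{\mathcal X}+\mathbf N$ with $\mathbf N=\mathbf P_{\ker(\mathbf A)}\mathbf U$, $\mathbf P_{\ker(\mathbf A)}$ the orthogonal projection onto $\ker(\mathbf A)$ and $\mathbf U\colon\mathcal X\to\mathcal X$ Lipschitz. A family of Lipschitz maps $\nu_{\theta(\alpha)}\colon\mathcal X\to\mathcal X$ is $((\mathbf B_\alpha),\mathbf N)$-adapted if $\nu_{\theta(\alpha)}(\mathbf B_\alpha\mathbf Az)\to\mathbf N(z)$ as $\alpha\to0$ for all $z\in\operatorname{ran}(\mathbf A^{+})$ and all Lipschitz constants are bounded by some $L>0$. Distance function: $d_\alpha(x;\rho,\mu)\coloneqq\inf\{\|x-\nu_{\theta(\alpha)}\mathbf B_\alpha\mathbf Ax-(\mathbf A^*\mathbf A)^\mu\omega\|:\omega\in\mathcal X,\ \|\omega\|\le\rho\}$. *)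

(* Real Hilbert spaces are modelled as
   complete normed modules over R : realType equipped with an inner product
   inducing the norm. *)
From HB Require Import structures.
From mathcomp Require Import all_boot all_order all_algebra.
From mathcomp Require Import all_classical all_reals all_analysis.
Set Implicit Arguments. Unset Strict Implicit. Unset Printing Implicit Defensive.
Import Order.TTheory GRing.Theory Num.Theory.
Import numFieldNormedType.Exports.
Local Open Scope classical_set_scope.
Local Open Scope ring_scope.

Section Defs.
Variable R : realType.

Record inner_product (X : normedModType R) (ip : X -> X -> R) : Prop := {
  ip_sym : forall x y, ip x y = ip y x;
  ip_linl : forall (a : R) x y z, ip (a *: x + y) z = a * ip x z + ip y z;
  ip_norm : forall x, `|x| ^+ 2 = ip x x }.

Definition orthonormal (X : normedModType R) (ip : X -> X -> R)
  (e : nat -> X) : Prop :=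
  forall i j, ip (e i) (e j) = (i == j)%:R.

Definition hsum (X : normedModType R) (f : nat -> X) : X := limn (series f).

Definition bounded_linear (X Y : normedModType R) (A : X -> Y) : Prop :=
  linear A /\ exists C : R, forall x, `|A x| <= C * `|x|.

Definition is_svd (X Y : normedModType R) (ipX : X -> X -> R) (ipY : Y -> Y -> R)
  (A : X -> Y) (sigma : nat -> R) (u : nat -> X) (v : nat -> Y) : Prop :=
  orthonormal ipX u /\ orthonormal ipY v /\ (forall n, 0 < sigma n) /\
  forall x, series (fun n => (sigma n * ipX (u n) x) *: v n) @ \oo --> A x.

Definition tsvd (X Y : normedModType R) (ipY : Y -> Y -> R)
  (sigma : nat -> R) (u : nat -> X) (v : nat -> Y) (alpha : R) (y : Y) : X :=
  hsum (fun n => if alpha <= sigma n ^+ 2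
                 then ((sigma n)^-1 * ipY y (v n)) *: u n else 0).

(* (A^* A)^mu w = sum_n sigma_n^(2 mu) <u_n, w> u_n  (functional calculus via SVD) *)
Definition AApow (X : normedModType R) (ipX : X -> X -> R)
  (sigma : nat -> R) (u : nat -> X) (mu : R) (w : X) : X :=
  hsum (fun n => (sigma n `^ (2 * mu) * ipX (u n) w) *: u n).

Definition kernel (X Y : normedModType R) (A : X -> Y) : set X := [set x | A x = 0].

(* ran(A^+) = ker(A)^perp *)
Definition ran_pinv (X Y : normedModType R) (ipX : X -> X -> R) (A : X -> Y) : set X :=
  [set z | forall k, kernel A k -> ipX z k = 0].

Definition lipschitz_with (X : normedModType R) (L : R) (f : X -> X) : Prop :=
  forall x y, `|f x - f y| <= L * `|x - y|.

Definition lipschitz (X : normedModType R) (f : X -> X) : Prop :=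
  exists L : R, lipschitz_with L f.

Definition is_orth_proj (X : normedModType R) (ipX : X -> X -> R)
  (K : set X) (P : X -> X) : Prop :=
  forall x, K (P x) /\ forall k, K k -> ipX (x - P x) k = 0.

Definition null_space_network (X Y : normedModType R) (ipX : X -> X -> R)
  (A : X -> Y) (N : X -> X) : Prop :=
  exists (U : X -> X) (P : X -> X),
    lipschitz U /\ is_orth_proj ipX (kernel A) P /\ forall z, N z = P (U z).

Definition nu_map (X Y : normedModType R) (A : X -> Y) (B : R -> Y -> X)
  (U : R -> X -> X) (alpha : R) (z : X) : X :=
  U alpha z - B alpha (A (U alpha z)).

Definition recon (X Y : normedModType R) (A : X -> Y) (B : R -> Y -> X)
  (U : R -> X -> X) (alpha : R) (y : Y) : X :=
  B alpha y + nu_map A B U alpha (B alpha y).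

Definition adapted (X Y : normedModType R) (ipX : X -> X -> R) (A : X -> Y)
  (B : R -> Y -> X) (nu : R -> X -> X) (N : X -> X) : Prop :=
  (exists L : R, 0 < L /\ forall alpha, 0 < alpha -> lipschitz_with L (nu alpha)) /\
  forall z, ran_pinv ipX A z ->
    (fun alpha => nu alpha (B alpha (A z))) @ 0^'+ --> N z.

Definition dist_alpha (X Y : normedModType R) (A : X -> Y) (B : R -> Y -> X)
  (nu : R -> X -> X) (AAmu : X -> X) (rho : R) (alpha : R) (x : X) : R :=
  inf [set `|x - nu alpha (B alpha (A x)) - AAmu w| | w in [set w : X | `|w| <= rho]].

End Defs.

From Pilot Require Import Defs.
From HB Require Import structures.
From mathcomp Require Import all_boot all_order all_algebra.
From mathcomp Require Import all_classical all_reals all_analysis.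
From mathcomp Require Import ring lra.
Import Order.TTheory GRing.Theory Num.Theory.
Import numFieldNormedType.Exports.
Local Open Scope classical_set_scope.
Local Open Scope ring_scope.

(* With w = x - nu(B_alpha A x), the error splits as
     R_alpha(y) - x = B_alpha(y - A x) + [nu(B_alpha y) - nu(B_alpha A x)]
                      - (Id - B_alpha A) w,
   because B_alpha A is the orthogonal projection onto the span of the u_n with
   sigma_n^2 >= alpha and therefore kills the range of nu = (Id - B_alpha A) U.
   The first two terms are at most (1 + L) delta / sqrt alpha.  For the third,
   write w = (w - (A^*A)^mu omega) + (A^*A)^mu omega with |omega| <= rho: the
   complementary projection is a contraction and damps (A^*A)^mu omega by
   alpha^mu, so the term is at most d_alpha(x) + rho alpha^mu.  With
   alpha ~ delta^(2/(2mu+1)), both delta / sqrt alpha and alpha^mu are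
   O(delta^(2mu/(2mu+1))). *)

Section InnerProduct.
Context {R : realType} {X : normedModType R} {ip : X -> X -> R}.
Hypothesis Hip : inner_product ip.

Lemma ipDl x y z : ip (x + y) z = ip x z + ip y z.
Proof. by have := ip_linl Hip 1 x y z; rewrite scale1r mul1r. Qed.

Lemma ip0l z : ip 0 z = 0.
Proof. by apply: (addrI (ip 0 z)); rewrite -ipDl !addr0. Qed.

Lemma ipZl a x z : ip (a *: x) z = a * ip x z.
Proof. by have := ip_linl Hip a x 0 z; rewrite !addr0 ip0l addr0. Qed.

Lemma ipBl x y z : ip (x - y) z = ip x z - ip y z.
Proof. by rewrite ipDl -scaleN1r ipZl mulN1r. Qed.

Lemma ipDr x y z : ip z (x + y) = ip z x + ip z y.
Proof. by rewrite !(ip_sym Hip z) ipDl. Qed.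

Lemma ipZr a x z : ip z (a *: x) = a * ip z x.
Proof. by rewrite !(ip_sym Hip z) ipZl. Qed.

Lemma ipBr x y z : ip z (x - y) = ip z x - ip z y.
Proof. by rewrite !(ip_sym Hip z) ipBl. Qed.

Lemma ip_suml (I : Type) (r : seq I) (P : pred I) (F : I -> X) z :
  ip (\sum_(i <- r | P i) F i) z = \sum_(i <- r | P i) ip (F i) z.
Proof. by apply: (big_morph (ip^~ z)) => [x y /=|]; rewrite ?ipDl ?ip0l. Qed.

Lemma normsqD x y : `|x + y| ^+ 2 = `|x| ^+ 2 + 2 * ip x y + `|y| ^+ 2.
Proof. by rewrite !(ip_norm Hip) ipDl !ipDr (ip_sym Hip y x); ring. Qed.

Lemma normsqB x y : `|x - y| ^+ 2 = `|x| ^+ 2 - 2 * ip x y + `|y| ^+ 2.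
Proof. by rewrite !(ip_norm Hip) ipBl !ipBr (ip_sym Hip y x); ring. Qed.

Lemma ip_polarization x y : ip x y = (`|x + y| ^+ 2 - `|x - y| ^+ 2) / 4.
Proof. by rewrite normsqD normsqB; field. Qed.

Lemma ip_cvgl {T : Type} {F : set_system T} {FF : Filter F} {f : T -> X} {a : X} b :
  f @ F --> a -> (fun t => ip (f t) b) @ F --> ip a b.
Proof.
move=> fa; rewrite ip_polarization.
under eq_fun do rewrite ip_polarization.
apply: cvgM; last exact: cvg_cst.
by apply: cvgB; apply: cvgM; apply: cvg_norm; apply: cvgD => //; apply: cvg_cst.
Qed.

Section Orthonormal.
Context {e : nat -> X}.
Hypothesis He : Defs.orthonormal ip e.

Lemma orthonormal_norm n : `|e n| = 1.
Proof.
have : `|e n| ^+ 2 = 1 ^+ 2 by rewrite (ip_norm Hip) He eqxx expr1n.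
by move/eqP; rewrite eqrXn2 // => /eqP.
Qed.

Lemma ip_sum_orthonormal (c : nat -> R) n m :
  ip (\sum_(0 <= k < n) c k *: e k) (e m) = if (m < n)%N then c m else 0.
Proof.
rewrite ip_suml (eq_bigr (fun k => if k == m then c k else 0)).
  by rewrite -big_mkcond big_nat1_eq.
by move=> k _; rewrite ipZl He; case: eqP; rewrite ?mulr1 ?mulr0.
Qed.

Lemma normsq_sum_orthonormal (c : nat -> R) a b :
  `|\sum_(a <= k < b) c k *: e k| ^+ 2 = \sum_(a <= k < b) c k ^+ 2.
Proof.
elim: b => [|b IH]; first by rewrite !big_geq // normr0 expr0n.
have [ab|ba] := leqP a b; last by rewrite !big_geq // normr0 expr0n.
have orth : ip (\sum_(a <= k < b) c k *: e k) (c b *: e b) = 0.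
  rewrite ipZr ip_suml big_nat_cond big1 ?mulr0 // => k /andP[/andP[_ kb] _].
  by rewrite ipZl He (ltn_eqF kb) mulr0.
rewrite !big_nat_recr //= normsqD IH orth normrZ orthonormal_norm.
by rewrite mulr1 real_normK ?num_real // mulr0 addr0.
Qed.

Lemma bessel_inequality z n : \sum_(0 <= k < n) ip (e k) z ^+ 2 <= `|z| ^+ 2.
Proof.
set S := \sum_(0 <= k < n) ip (e k) z *: e k.
have zS : ip z S = \sum_(0 <= k < n) ip (e k) z ^+ 2.
  rewrite (ip_sym Hip) ip_suml; apply: eq_bigr => k _.
  by rewrite ipZl expr2.
have := sqr_ge0 `|z - S|; rewrite normsqB zS normsq_sum_orthonormal; lra.
Qed.

Section SeriesLimit.
Variables (c : nat -> R) (S : X).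
Hypothesis cS : series (fun k => c k *: e k) @ \oo --> S.

Lemma ip_series_lim z :
  (fun n => \sum_(0 <= k < n) c k * ip (e k) z) @ \oo --> ip S z.
Proof.
under eq_fun do under eq_bigr do rewrite -ipZl; under eq_fun do rewrite -ip_suml.
exact: ip_cvgl.
Qed.

Lemma orthonormal_coef_lim m : ip S (e m) = c m.
Proof.
suff partial_cm : (fun n => ip (series (fun k => c k *: e k) n) (e m)) @ \oo --> c m.
  exact: cvg_unique _ (ip_cvgl (e m) cS) partial_cm.
apply: cvg_near_cst; near=> n.
rewrite /series /= ip_sum_orthonormal ifT //.
by near: n; exact: nbhs_infty_gt.
Unshelve. all: by end_near.
Qed.

Lemma orthonormal_normsq_lim :
  (fun n => \sum_(0 <= k < n) c k ^+ 2) @ \oo --> `|S| ^+ 2.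
Proof.
under eq_fun do rewrite -normsq_sum_orthonormal.
by apply: cvgM; apply: cvg_norm.
Qed.

Lemma orthonormal_normsq_lim_le M :
  (forall n, \sum_(0 <= k < n) c k ^+ 2 <= M) -> `|S| ^+ 2 <= M.
Proof.
move=> cM; rewrite -(cvg_lim _ orthonormal_normsq_lim) //.
by apply: limr_le; [exact: cvgP orthonormal_normsq_lim | exact: nearW].
Qed.

End SeriesLimit.
End Orthonormal.
End InnerProduct.

Lemma series_scalerBl_cvg {R : realType} {X : normedModType R} {e : nat -> X}
    {c1 c2 : nat -> R} {S1 S2 : X} :
  series (fun k => c1 k *: e k) @ \oo --> S1 ->
  series (fun k => c2 k *: e k) @ \oo --> S2 ->
  series (fun k => (c1 k - c2 k) *: e k) @ \oo --> S1 - S2.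
Proof.
move=> cS1 cS2.
have -> : series (fun k => (c1 k - c2 k) *: e k) =
    series (fun k => c1 k *: e k) - series (fun k => c2 k *: e k).
  by rewrite -seriesN -seriesD; congr series; apply/funext => k /=; rewrite scalerBl.
exact: cvgB.
Qed.

Lemma series_scaler_limB {R : realType} {X : normedModType R} {e : nat -> X}
    {c c1 c2 : nat -> R} {S S1 S2 : X} :
  (forall k, c k = c1 k - c2 k) ->
  series (fun k => c k *: e k) @ \oo --> S ->
  series (fun k => c1 k *: e k) @ \oo --> S1 ->
  series (fun k => c2 k *: e k) @ \oo --> S2 -> S = S1 - S2.
Proof.
move=> cE cS cS1 cS2; have cS12 := series_scalerBl_cvg cS1 cS2.
rewrite (_ : (fun k => _) = fun k => c k *: e k) in cS12; last first.
  by apply/funext => k; rewrite cE.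
exact: cvg_unique _ cS cS12.
Qed.

(* Square-summable coefficients give a Cauchy series, by Pythagoras on the tails. *)
Lemma orthonormal_series_cvg {R : realType} {X : completeNormedModType R}
    {ip : X -> X -> R} {e : nat -> X} {c : nat -> R} {M : R} :
  inner_product ip -> Defs.orthonormal ip e ->
  (forall n, \sum_(0 <= k < n) c k ^+ 2 <= M) ->
  series (fun k => c k *: e k) @ \oo --> hsum (fun k => c k *: e k).
Proof.
move=> Hip He cM; suff : cvgn (series (fun k => c k *: e k)) by move/cvgP.
apply: cauchy_cvg; apply/cauchy_seriesP => eps eps0.
have sqr_cvg : cvgn (series (fun k => c k ^+ 2)).
  apply/cvgP/nondecreasing_cvgn; last by exists M => _ [n _ <-]; exact: cM.
  by apply: nondecreasing_series => n _ _; exact: sqr_ge0.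
have sqr_cauchy : cauchy (series (fun k => c k ^+ 2) @ \oo) by exact: cvg_cauchy.
have := (cauchy_seriesP _).1 sqr_cauchy (eps ^+ 2) (exprn_gt0 _ eps0).
apply: filterS => -[a b] /=.
rewrite -(normsq_sum_orthonormal Hip He) ger0_norm ?sqr_ge0 // => tail_lt.
by rewrite -(@ltr_pXn2r _ 2) ?nnegrE // ltW.
Qed.

Lemma noise_rate {R : realType} {c delta alpha p q : R} :
  0 < c -> 0 < delta -> c * delta `^ p <= alpha -> 2 * q + p = 2 ->
  delta / Num.sqrt alpha <= delta `^ q / Num.sqrt c.
Proof.
move=> c_gt0 delta_gt0 alpha_ge pq.
have alpha_gt0 : 0 < alpha by apply: lt_le_trans alpha_ge; rewrite mulr_gt0 ?powR_gt0.
have [c_ge0 delta_ge0 alpha_ge0] := And3 (ltW c_gt0) (ltW delta_gt0) (ltW alpha_gt0).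
rewrite -(@ler_pXn2r _ 2) ?nnegrE ?divr_ge0 ?powR_ge0 ?sqrtr_ge0 //.
rewrite !expr_div_n !sqr_sqrtr // ler_pdivrMr // mulrAC ler_pdivlMr //.
have powq : (delta `^ q) ^+ 2 * delta `^ p = delta ^+ 2.
  rewrite expr2 -!powRD ?(gt_eqF delta_gt0) ?implybT //.
  by rewrite -mulr2n -mulr_natl pq powR_mulrn.
have := ler_wpM2l (sqr_ge0 (delta `^ q)) alpha_ge; nra.
Qed.

Lemma bias_rate {R : realType} {c delta alpha p mu : R} :
  0 <= c -> 0 <= delta -> 0 <= alpha -> 0 <= mu -> alpha <= c * delta `^ p ->
  alpha `^ mu <= c `^ mu * delta `^ (p * mu).
Proof.
move=> c_ge0 delta_ge0 alpha_ge0 mu_ge0 alpha_le.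
rewrite powRrM -powRM ?powR_ge0 //.
by apply: ge0_ler_powR; rewrite ?nnegrE ?mulr_ge0 ?powR_ge0.
Qed.

Lemma small_powR_bound {R : realType} {c a p : R} : 0 < c -> 0 < a -> 0 < p ->
  exists2 d, 0 < d & forall delta, 0 <= delta < d -> c * delta `^ p < a.
Proof.
move=> c_gt0 a_gt0 p_gt0; exists ((a / c) `^ p^-1); first by rewrite powR_gt0 ?divr_gt0.
move=> delta /andP[delta_ge0 delta_lt]; rewrite -ltr_pdivlMl // mulrC.
have rootK : ((a / c) `^ p^-1) `^ p = a / c.
  by rewrite -powRrM mulVf ?gt_eqF // powRr1 // divr_ge0 ?ltW.
by rewrite -rootK gt0_ltr_powR ?nnegrE ?powR_ge0.
Qed.

Section TruncatedSVD.
Context {R : realType} {X Y : completeNormedModType R}.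
Context {ipX : X -> X -> R} {ipY : Y -> Y -> R}.
Hypotheses (HX : inner_product ipX) (HY : inner_product ipY).
Context {sigma : nat -> R} {u : nat -> X} {v : nat -> Y}.
Hypotheses (Hu : Defs.orthonormal ipX u) (Hv : Defs.orthonormal ipY v).
Hypothesis sigma_gt0 : forall n, 0 < sigma n.
Variable alpha : R.
Hypothesis alpha_gt0 : 0 < alpha.

Local Notation B := (tsvd ipY sigma u v alpha).

Definition spectral_cutoff (c : nat -> R) (n : nat) : R :=
  if alpha <= sigma n ^+ 2 then c n else 0.

Lemma spectral_cutoffB (c1 c2 : nat -> R) n :
  spectral_cutoff (fun k => c1 k - c2 k) n =
  spectral_cutoff c1 n - spectral_cutoff c2 n.
Proof. by rewrite /spectral_cutoff; case: ifP; rewrite ?subr0. Qed.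

Definition tsvd_coef (y : Y) : nat -> R :=
  spectral_cutoff (fun n => (sigma n)^-1 * ipY y (v n)).

Lemma tsvdE y : B y = hsum (fun n => tsvd_coef y n *: u n).
Proof.
rewrite /tsvd; congr hsum; apply/funext => n.
by rewrite /tsvd_coef /spectral_cutoff; case: ifP; rewrite ?scale0r.
Qed.

Lemma tsvd_coef_normsq_le y n :
  \sum_(0 <= k < n) tsvd_coef y k ^+ 2 <= `|y| ^+ 2 / alpha.
Proof.
apply: (@le_trans _ _ (\sum_(0 <= k < n) ipY (v k) y ^+ 2 / alpha)); last first.
  rewrite -mulr_suml; apply: ler_wpM2r; last exact: bessel_inequality.
  by rewrite invr_ge0 ltW.
apply: ler_sum => k _; rewrite /tsvd_coef /spectral_cutoff.
case: ifP => [cut|_]; last by rewrite expr0n /= divr_ge0 ?sqr_ge0 ?ltW.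
rewrite (ip_sym HY) exprMn exprVn mulrC ler_wpM2l ?sqr_ge0 //.
by rewrite lef_pV2 ?posrE ?exprn_gt0.
Qed.

Lemma tsvd_series_cvg y :
  series (fun n => tsvd_coef y n *: u n) @ \oo --> B y.
Proof.
by rewrite tsvdE; apply: (orthonormal_series_cvg HX Hu (tsvd_coef_normsq_le y)).
Qed.

Lemma tsvd_norm_le y : `|B y| <= `|y| / Num.sqrt alpha.
Proof.
have sqrt_gt0 : 0 < Num.sqrt alpha by rewrite sqrtr_gt0.
rewrite -(@ler_pXn2r _ 2) ?nnegrE ?divr_ge0 ?sqrtr_ge0 //.
rewrite expr_div_n sqr_sqrtr ?(ltW alpha_gt0) //.
exact: (orthonormal_normsq_lim_le HX Hu _ _ (tsvd_series_cvg y)) (tsvd_coef_normsq_le y).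
Qed.

Lemma tsvdB y1 y2 : B (y1 - y2) = B y1 - B y2.
Proof.
apply: series_scaler_limB (tsvd_series_cvg _) (tsvd_series_cvg y1) (tsvd_series_cvg y2).
move=> k; rewrite -spectral_cutoffB; congr spectral_cutoff.
by apply/funext => n; rewrite (ipBl HY) mulrBr.
Qed.

Variable A : X -> Y.
Hypothesis svd_series :
  forall x, series (fun n => (sigma n * ipX (u n) x) *: v n) @ \oo --> A x.

Local Notation Q z := (z - B (A z)).

Lemma svd_coef z m : ipY (A z) (v m) = sigma m * ipX (u m) z.
Proof. exact: (orthonormal_coef_lim HY Hv _ _ (svd_series z) m). Qed.

(* [B (A z)] is the orthogonal projection of [z] onto the span of the [u n] with
   [alpha <= sigma n ^+ 2]. *)
Lemma tsvd_coefA z : tsvd_coef (A z) = spectral_cutoff (fun n => ipX (u n) z).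
Proof.
apply/funext => n; rewrite /tsvd_coef /spectral_cutoff; case: ifP => // _.
by rewrite svd_coef mulrA mulVf ?mul1r ?gt_eqF.
Qed.

Lemma tsvdA_series_cvg z :
  series (fun n => spectral_cutoff (fun k => ipX (u k) z) n *: u n) @ \oo -->
  B (A z).
Proof. by rewrite -tsvd_coefA; exact: tsvd_series_cvg. Qed.

Lemma tsvdA_coef z m :
  ipX (B (A z)) (u m) = spectral_cutoff (fun k => ipX (u k) z) m.
Proof. exact: (orthonormal_coef_lim HX Hu _ _ (tsvdA_series_cvg z) m). Qed.

Lemma tsvdAB z1 z2 : B (A (z1 - z2)) = B (A z1) - B (A z2).
Proof.
apply: series_scaler_limB (tsvdA_series_cvg _) (tsvdA_series_cvg z1)
  (tsvdA_series_cvg z2).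
move=> k; rewrite -spectral_cutoffB; congr spectral_cutoff.
by apply/funext => n; rewrite (ipBr HX).
Qed.

Lemma tsvdA_compl z : B (A (Q z)) = 0.
Proof.
have coef0 n : spectral_cutoff (fun k => ipX (u k) (Q z)) n = 0.
  rewrite /spectral_cutoff; case: ifP => // cut.
  by rewrite (ipBr HX) (ip_sym HX (u n) (B _)) tsvdA_coef /spectral_cutoff cut subrr.
have := tsvdA_series_cvg (Q z).
rewrite (_ : series _ = fun=> 0); last first.
  by apply/funext => n; rewrite /series /= big1 // => k _; rewrite coef0 scale0r.
by move=> cvg0; apply: esym; exact: cvg_unique _ (cvg_cst 0) cvg0.
Qed.

Lemma norm_compl_tsvdA_le z : `|Q z| <= `|z|.
Proof.
have ip_Pz : ipX (B (A z)) z = `|B (A z)| ^+ 2.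
  have := ip_series_lim HX _ _ (tsvdA_series_cvg z) z.
  set cP := spectral_cutoff _.
  rewrite (_ : (fun n => _) = fun n => \sum_(0 <= k < n) cP k ^+ 2); last first.
    apply/funext => n; apply: eq_bigr => k _.
    by rewrite /cP /spectral_cutoff; case: ifP => _; rewrite expr2 ?mul0r.
  move=> ip_lim.
  exact: (cvg_unique _ ip_lim (orthonormal_normsq_lim HX Hu _ _ (tsvdA_series_cvg z))).
rewrite -(@ler_pXn2r _ 2) ?nnegrE // (normsqB HX) (ip_sym HX) ip_Pz.
have := sqr_ge0 `|B (A z)|; lra.
Qed.

Hypothesis A_bounded : exists C, forall x, `|A x| <= C * `|x|.

Lemma sigma_sqr_bounded : exists M, forall n, sigma n ^+ 2 <= M.
Proof.
have [C AC] := A_bounded; exists (C ^+ 2) => n.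
have Aun_le : `|A (u n)| <= C by have := AC (u n); rewrite (orthonormal_norm HX Hu) mulr1.
have := bessel_inequality HY Hv (A (u n)) n.+1.
rewrite big_nat_recr //= (ip_sym HY) svd_coef Hu eqxx mulr1 => bessel_n.
have : 0 <= \sum_(0 <= k < n) ipY (v k) (A (u n)) ^+ 2.
  by apply: sumr_ge0 => k _; exact: sqr_ge0.
have := normr_ge0 (A (u n)); nra.
Qed.

Variable mu : R.
Hypothesis mu_ge0 : 0 <= mu.

Local Notation T := (AApow ipX sigma u mu).

Lemma AApow_series_cvg w :
  series (fun n => (sigma n `^ (2 * mu) * ipX (u n) w) *: u n) @ \oo --> T w.
Proof.
have [M sigmaM] := sigma_sqr_bounded.
apply: (orthonormal_series_cvg HX Hu (M := (M `^ mu) ^+ 2 * `|w| ^+ 2)) => n.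
apply: (@le_trans _ _ ((M `^ mu) ^+ 2 * \sum_(0 <= k < n) ipX (u k) w ^+ 2)).
  rewrite mulr_sumr; apply: ler_sum => k _.
  rewrite exprMn ler_wpM2r ?sqr_ge0 // lerXn2r ?nnegrE ?powR_ge0 //.
  rewrite powRrM powR_mulrn ?(ltW (sigma_gt0 k)) // ge0_ler_powR ?nnegrE ?sqr_ge0 //.
  exact: le_trans (sqr_ge0 _) (sigmaM k).
by apply: ler_wpM2l; [exact: sqr_ge0 | exact: bessel_inequality].
Qed.

(* Only the components with [sigma n ^+ 2 < alpha] survive, and those are damped
   by [sigma n `^ (2 * mu) <= alpha `^ mu]. *)
Lemma norm_compl_tsvdA_AApow_le w : `|Q (T w)| <= alpha `^ mu * `|w|.
Proof.
have := series_scalerBl_cvg (AApow_series_cvg w) (tsvdA_series_cvg (T w)).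
move/(orthonormal_normsq_lim_le HX Hu) => normsq_le.
rewrite -(@ler_pXn2r _ 2) ?nnegrE ?mulr_ge0 ?powR_ge0 // exprMn.
apply: normsq_le => n.
apply: (@le_trans _ _ ((alpha `^ mu) ^+ 2 * \sum_(0 <= k < n) ipX (u k) w ^+ 2)).
  rewrite mulr_sumr; apply: ler_sum => k _.
  rewrite /spectral_cutoff; case: ifP => [_|cut].
    rewrite (ip_sym HX (u k) (T w)) (orthonormal_coef_lim HX Hu _ _ (AApow_series_cvg w)).
    by rewrite subrr expr0n mulr_ge0 ?sqr_ge0.
  rewrite subr0 exprMn ler_wpM2r ?sqr_ge0 // lerXn2r ?nnegrE ?powR_ge0 //.
  rewrite powRrM powR_mulrn ?(ltW (sigma_gt0 k)) //.
  rewrite ge0_ler_powR ?nnegrE ?sqr_ge0 ?(ltW alpha_gt0) //.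
  by rewrite ltW // ltNge cut.
by apply: ler_wpM2l; [exact: sqr_ge0 | exact: bessel_inequality].
Qed.

Lemma compl_tsvdA_le_dist (nu : R -> X -> X) (rho : R) x : 0 <= rho ->
  `|Q (x - nu alpha (B (A x)))| <=
  dist_alpha A (tsvd ipY sigma u v) nu T rho alpha x + alpha `^ mu * rho.
Proof.
move=> rho_ge0; set w := x - _; rewrite -lerBlDr.
apply: lb_le_inf => [|_ [om om_le <-]]; first by exists `|w - T 0|, 0; rewrite //= normr0.
have -> : Q w = Q (w - T om) + Q (T om).
  by rewrite (tsvdAB w) addrACA subrK opprB [_ - B (A w) - _]addrAC subrr add0r.
rewrite lerBlDr; apply: le_trans (ler_normD _ _) _.
apply: lerD; first exact: norm_compl_tsvdA_le.
apply: le_trans (norm_compl_tsvdA_AApow_le om) _.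
by apply: ler_wpM2l; first exact: powR_ge0.
Qed.

Lemma recon_error_le (U : R -> X -> X) (rho L : R) x y :
  0 <= rho -> 0 <= L -> lipschitz_with L (nu_map A (tsvd ipY sigma u v) U alpha) ->
  `|recon A (tsvd ipY sigma u v) U alpha y - x| <=
    (1 + L) * (`|A x - y| / Num.sqrt alpha)
    + dist_alpha A (tsvd ipY sigma u v) (nu_map A (tsvd ipY sigma u v) U) T rho alpha x
    + alpha `^ mu * rho.
Proof.
move=> rho_ge0 L_ge0 nu_lip.
set nu := nu_map A (tsvd ipY sigma u v) U.
set z := B (A x); set w := x - nu alpha z.
have Bw : B (A w) = z by rewrite /w /nu /nu_map tsvdAB tsvdA_compl subr0.
have -> : recon A (tsvd ipY sigma u v) U alpha y - x =
    (B y - z) + (nu alpha (B y) - nu alpha z) - Q w.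
  rewrite Bw /recon -/nu /w.
  rewrite addrACA -(opprD z) -(addrA x) -opprD (addrC (nu alpha z)) opprB.
  by rewrite [RHS]addrA subrK.
have noise : `|B y - z| <= `|A x - y| / Num.sqrt alpha.
  by rewrite /z -tsvdB distrC; exact: tsvd_norm_le.
have := compl_tsvdA_le_dist nu rho x rho_ge0; rewrite -/z -/w => compl_le.
have := ler_normB (B y - z + (nu alpha (B y) - nu alpha z)) (Q w).
have := ler_normD (B y - z) (nu alpha (B y) - nu alpha z).
have := nu_lip (B y) z; nra.
Qed.

Lemma recon_error_rate (U : R -> X -> X) (rho L Cd c1 c2 delta p q : R) x y :
  0 <= rho -> 0 <= L -> lipschitz_with L (nu_map A (tsvd ipY sigma u v) U alpha) ->
  0 <= Cd ->
  dist_alpha A (tsvd ipY sigma u v) (nu_map A (tsvd ipY sigma u v) U) T rho alpha x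
    <= Cd * alpha `^ mu ->
  0 < c1 -> 0 <= c2 -> 0 < delta ->
  c1 * delta `^ p <= alpha -> alpha <= c2 * delta `^ p ->
  2 * q + p = 2 -> p * mu = q -> `|A x - y| <= delta ->
  `|recon A (tsvd ipY sigma u v) U alpha y - x|
    <= ((1 + L) / Num.sqrt c1 + (Cd + rho) * c2 `^ mu) * delta `^ q.
Proof.
move=> rho_ge0 L_ge0 nu_lip Cd_ge0 dist_le c1_gt0 c2_ge0 delta_gt0.
move=> alpha_lo alpha_hi pq pmu data_err.
have := recon_error_le U rho L x y rho_ge0 L_ge0 nu_lip.
have noise : `|A x - y| / Num.sqrt alpha <= delta `^ q / Num.sqrt c1.
  apply: le_trans (noise_rate c1_gt0 delta_gt0 alpha_lo pq).
  by rewrite ler_pM2r ?invr_gt0 ?sqrtr_gt0.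
have bias : alpha `^ mu <= c2 `^ mu * delta `^ q.
  by rewrite -pmu; apply: bias_rate alpha_hi => //; rewrite ltW.
have := powR_ge0 delta q; have := powR_ge0 alpha mu.
have : 0 < Num.sqrt c1 by rewrite sqrtr_gt0.
nra.
Qed.

End TruncatedSVD.

Theorem theorem4p2 (R : realType)
  (X Y : completeNormedModType R) (ipX : X -> X -> R) (ipY : Y -> Y -> R)
  (A : X -> Y) (sigma : nat -> R) (u : nat -> X) (v : nat -> Y)
  (U : R -> X -> X) (N : X -> X) (rho mu : R) (Mrm : set X) :
  inner_product ipX -> inner_product ipY ->
  bounded_linear A ->
  is_svd ipX ipY A sigma u v ->
  null_space_network ipX A N ->
  adapted ipX A (tsvd ipY sigma u v) (nu_map A (tsvd ipY sigma u v) U) N ->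
  0 < rho -> 0 < mu ->
  Mrm `<=` [set z + N z | z in ran_pinv ipX A] ->
  (forall x, Mrm x -> exists C : R, exists a0 : R, 0 < a0 /\
     forall alpha, 0 < alpha < a0 ->
       dist_alpha A (tsvd ipY sigma u v) (nu_map A (tsvd ipY sigma u v) U)
         (AApow ipX sigma u mu) rho alpha x <= C * alpha `^ mu) ->
  forall (alpha_of : R -> R) (c1 c2 d1 : R),
    0 < c1 -> 0 < c2 -> 0 < d1 ->
    (forall delta, 0 < delta < d1 ->
       c1 * delta `^ (2 / (2 * mu + 1)) <= alpha_of delta
       /\ alpha_of delta <= c2 * delta `^ (2 / (2 * mu + 1))) ->
  forall x, Mrm x ->
  exists C : R, exists d0 : R, 0 < d0 /\
    forall delta, 0 < delta < d0 ->
    forall y_delta : Y, `|A x - y_delta| <= delta ->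
      `|recon A (tsvd ipY sigma u v) U (alpha_of delta) y_delta - x|
        <= C * delta `^ (2 * mu / (2 * mu + 1)).
Proof.
(* Only the uniform Lipschitz bound of the adapted family enters the estimate. *)
move=> HX HY [_ A_bounded] [Hu [Hv [sigma_gt0 svd_series]]] _ [[L [L_gt0 nu_lip]] _].
move=> rho_gt0 mu_gt0 _ dist_rate alpha_of c1 c2 d1 c1_gt0 c2_gt0 d1_gt0 alpha_asymp x Mx.
have [Cx [a0 [a0_gt0 dist_le]]] := dist_rate x Mx.
set p := 2 / (2 * mu + 1); set q := 2 * mu / (2 * mu + 1).
have den_neq0 : 2 * mu + 1 != 0 by rewrite gt_eqF // addr_gt0 ?mulr_gt0.
have p_gt0 : 0 < p by rewrite divr_gt0 // lt_def den_neq0 addr_ge0 ?mulr_ge0 ?ltW.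
have pq : 2 * q + p = 2 by rewrite /p /q; field.
have pmu : p * mu = q by rewrite /p /q; field.
have [d d_gt0 alpha_small] := small_powR_bound c2_gt0 a0_gt0 p_gt0.
set Cd := Num.max Cx 0.
exists ((1 + L) / Num.sqrt c1 + (Cd + rho) * c2 `^ mu), (Num.min d1 d).
split=> [|delta /andP[delta_gt0]]; first by rewrite lt_min d1_gt0.
rewrite lt_min => /andP[delta_d1 delta_d] y data_err.
have [alpha_lo alpha_hi] := alpha_asymp delta (andb_true_intro (conj delta_gt0 delta_d1)).
have alpha_gt0 : 0 < alpha_of delta.
  by apply: lt_le_trans alpha_lo; rewrite mulr_gt0 ?powR_gt0.
have alpha_a0 : alpha_of delta < a0.
  by apply: le_lt_trans alpha_hi (alpha_small _ _); rewrite ltW.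
apply: (recon_error_rate HX HY Hu Hv sigma_gt0 _ alpha_gt0 _ svd_series A_bounded _
  (ltW mu_gt0) U rho L Cd c1 c2 delta p q x y) => //; try exact: ltW.
- exact: nu_lip.
- by rewrite le_max lexx orbT.
- apply: le_trans (dist_le _ _) _; first by rewrite alpha_gt0 alpha_a0.
  by rewrite ler_wpM2r ?powR_ge0 ?le_max ?lexx.
Qed.
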